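(* Let $X$ be as in the context and assume $X$ is recurrent. Suppose there exist non-negative functions $f_1,f_2$ on $\mathbb S$ such that (i) $\lim_{x\to\infty}f_1(x)=\infty$ and $\lim_{x\to\infty}f_2(x)/f_1(x)=\infty$; (ii) $\mathcal A f_1(x)\ge0$ for all sufficiently large $x\in\mathbb S$; (iii) $\mathcal A f_2(x)\lesssim 1$. Then $X$ is null recurrent.
   Context: Let $\mathbb S\subseteq\mathbb Z_{\ge0}$ be an infinite set and let $X$ be an irreducible continuous-time Markov chain on $\mathbb S$ whose generator acts on functions $f:\mathbb S\to\mathbb R$ by $\mathcal A f(x)=\sum_{\eta\in\mathbb Z}\lambda_\eta(x)\big(f(x+\eta)-f(x)\big)$, where $\lambda_\eta(x)$ is the rate of the jump $x\to x+\eta$ (and $\lambda_\eta(x)=0$ whenever $x+\eta\notin\mathbb S$). Standing assumption: (a) there is a finite set $\Gamma\subset\mathbb Z$ such that $\lambda_\eta\equiv0$ for $\eta\notin\Gamma$; (b) $0\le\lambda_\eta(x)<\infty$ for all $x,\eta$. Notation: $f\lesssim g$ means there is $C>0$ with $f(x)\le Cg(x)$ for all sufficiently large $x\in\mathbb S$. $X$ is null recurrent if it is recurrent but $\mathbb E_x[\tau_x]=\infty$ ($\tau_x$ the first return time to $x$ after the first jump). *)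

From HB Require Import structures.
From mathcomp Require Import all_boot all_order all_algebra.
From mathcomp Require Import all_classical all_reals all_analysis.
Set Implicit Arguments. Unset Strict Implicit. Unset Printing Implicit Defensive.
Import Order.TTheory GRing.Theory Num.Theory.
Local Open Scope classical_set_scope.
Local Open Scope ring_scope.

(* Continuous-time Markov chain on a state space S : set nat (S ⊆ Z_{>=0}),
   given by jump rates lam eta x  (rate of x -> x + eta, eta : int),
   with a finite jump set Gamma : seq int (duplicate-free).               *)

Section CTMC.
Variable R : realType.
Variable S : set nat.
Variable Gamma : seq int.
Variable lam : int -> nat -> R.

Definition inS (z : int) : Prop := (0 <= z)%R /\ S (absz z).

Definition gen (f : nat -> R) (x : nat) : R :=
  \sum_(eta <- Gamma) lam eta x * (f (absz (x%:Z + eta)) - f x).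

(* total jump rate out of x (jumps eta = 0 are fictitious) *)
Definition qrate (x : nat) : R := \sum_(eta <- Gamma | eta != 0) lam eta x.

Definition jumpP (x y : nat) : R :=
  if x == y then 0 else lam (y%:Z - x%:Z) x / qrate x.

Fixpoint path_prob (x : nat) (s : seq nat) : R :=
  if s is y :: s' then jumpP x y * path_prob y s' else 1.

Definition excursion (x : nat) (s : seq nat) : Prop :=
  s <> [::] /\ last x s = x /\ all (fun y => y != x) (behead (belast x s)).

(* conditional expected duration of the excursion given the jump path:
   sum of mean holding times 1/q(y) over the states occupied before return *)
Definition excursion_time (x : nat) (s : seq nat) : R :=
  \sum_(y <- belast x s) (qrate y)^-1.

Definition return_prob (x : nat) : \bar R :=
  \esum_(s in excursion x) (path_prob x s)%:E.

Definition expected_return_time (x : nat) : \bar R :=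
  \esum_(s in excursion x) (path_prob x s * excursion_time x s)%:E.

Definition irreducible : Prop :=
  forall x y, S x -> S y ->
    exists s : seq nat, last x s = y /\
      path (fun a b => (0 < lam (b%:Z - a%:Z) a) && (a != b)) x s.

Definition recurrent : Prop := forall x, S x -> return_prob x = 1%E.

Definition null_recurrent : Prop :=
  recurrent /\ forall x, S x -> expected_return_time x = +oo%E.

End CTMC.

From HB Require Import structures.
From mathcomp Require Import all_boot all_order all_algebra.
From mathcomp Require Import all_classical all_reals all_analysis.
From mathcomp Require Import zify ring lra.
Import Order.TTheory GRing.Theory Num.Theory.
Local Open Scope classical_set_scope.
Local Open Scope ring_scope.
Set Implicit Arguments. Unset Strict Implicit. Unset Printing Implicit Defensive.

(* Suppose E_x[tau_x] = r < oo.  Let B = [0, N) contain x and the states where the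
   drift conditions may fail, and start the jump chain at a far state z, stopping it
   on entering B.  The mean time before entering B is at most r divided by the
   probability of visiting z before returning to x, hence finite.  Dynkin's formula
   gives f1 z <= E f1(Y_stop) and E f2(Y_stop) <= f2 z + C * E(time), which is finite.
   As f1 = o(f2) + O(1) and, by recurrence, Y_stop lies in B with probability close
   to one, E f1(Y_stop) <= max_B f1 + 1/2, contradicting f1 z -> oo.  All
   expectations are finite sums over jump paths truncated after n jumps. *)

Lemma infinite_nat_set_unbounded (S : set nat) :
  ~ finite_set S -> forall M : nat, exists z, S z /\ (M <= z)%N.
Proof.
move=> infS M; apply/not_existsP => noz; apply: infS.
apply: (sub_finite_set _ (finite_II M)) => z Sz /=.
by rewrite ltnNge; apply/negP => Mz; apply: (noz z).
Qed.

Lemma exists_common_bound (r : seq nat) (Q : nat -> nat -> Prop) :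
  (forall v m m', (m <= m')%N -> Q v m -> Q v m') ->
  (forall v, v \in r -> exists m, Q v m) -> exists m, forall v, v \in r -> Q v m.
Proof.
move=> Qmono; elim: r => [|a r IH] Qr; first by exists 0%N.
have [ma Qa] := Qr a (mem_head a r).
have [mr Qr'] : exists m, forall v, v \in r -> Q v m.
  by apply: IH => v vr; apply: Qr; rewrite in_cons vr orbT.
exists (maxn ma mr) => v; rewrite in_cons => /orP[/eqP->|vr].
  exact: Qmono (leq_maxl _ _) Qa.
exact: Qmono (leq_maxr _ _) (Qr' v vr).
Qed.

Lemma path_from_last_visit (T : eqType) (e : rel T) (x w : T) s y :
  path e y s -> last y s = w -> w != x -> (y == x) || (x \in s) ->
  exists s', [/\ path e x s', last x s' = w & x \notin s'].
Proof.
elim: s y => [|v s IH] y /=; first by move=> _ -> /negPf->; rewrite orbF.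
move=> /andP[e_yv ps] last_w neq_wx.
case: (boolP ((v == x) || (x \in s))) => [visit _|x_notin].
  exact: IH ps last_w neq_wx visit.
have x_notin' : x \notin v :: s by rewrite in_cons eq_sym.
rewrite (negPf x_notin') orbF => /eqP eq_yx; subst y.
by exists (v :: s); rewrite /= e_yv.
Qed.

Lemma ler_sum_norm_iota (R : realDomainType) (f : nat -> R) N v :
  (v < N)%N -> f v <= \sum_(u <- iota 0 N) `|f u|.
Proof.
move=> vN; apply: le_trans (ler_norm _) _.
rewrite (bigD1_seq v) ?iota_uniq ?mem_iota //= lerDl.
by apply: sumr_ge0 => u _; apply: normr_ge0.
Qed.

Lemma ratio_growth_bound (R : realFieldType) (S : set nat) (f1 f2 : nat -> R) (eps : R) :
  0 < eps -> (forall x, S x -> 0 <= f2 x) ->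
  (forall M : R, exists N : nat, forall x, S x -> (N <= x)%N -> M <= f1 x) ->
  (forall M : R, exists N : nat, forall x, S x -> (N <= x)%N -> M <= f2 x / f1 x) ->
  exists K, 0 <= K /\ forall x, S x -> f1 x <= K + eps * f2 x.
Proof.
move=> eps_gt0 f2_ge0 f1_growth ratio_growth.
have [N1 f1_ge1] := f1_growth 1; have [N2 ratio_ge] := ratio_growth eps^-1.
set N := maxn N1 N2; set K := \sum_(u <- iota 0 N) `|f1 u|.
have K_ge0 : 0 <= K by apply: sumr_ge0 => u _; apply: normr_ge0.
exists K; split=> // x Sx; have eps_f2 := mulr_ge0 (ltW eps_gt0) (f2_ge0 x Sx).
case: (ltnP x N) => [xN|Nx]; first by have := ler_sum_norm_iota f1 xN; rewrite -/K; lra.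
have f1_gt0 : 0 < f1 x.
  by apply: lt_le_trans ltr01 (f1_ge1 x Sx (leq_trans (leq_maxl _ _) Nx)).
have := ratio_ge x Sx (leq_trans (leq_maxr _ _) Nx); rewrite ler_pdivlMr // => /(ler_wpM2l (ltW eps_gt0)).
rewrite mulrA mulfV ?gt_eqF // mul1r; lra.
Qed.

Lemma mulr_inv4S_le (R : realFieldType) (a : R) : 0 <= a -> a * (4 * (a + 1))^-1 <= 4^-1.
Proof.
by move=> a_ge0; rewrite invfM mulrCA ler_piMr ?invr_ge0 ?ler0n // ler_pdivrMr; lra.
Qed.

Section JumpChain.
Variables (R : realType) (S : set nat) (Gamma : seq int) (lam : int -> nat -> R).
Hypothesis Gamma_uniq : uniq Gamma.
Hypothesis lam_notin_Gamma : forall eta x, S x -> eta \notin Gamma -> lam eta x = 0.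
Hypothesis lam_ge0 : forall eta x, 0 <= lam eta x.
Hypothesis lam_exit : forall eta x, S x -> ~ inS S (x%:Z + eta) -> lam eta x = 0.

Local Notation q := (qrate Gamma lam).

Lemma qrate_ge0 y : 0 <= q y.
Proof. by apply: sumr_ge0 => eta _; apply: lam_ge0. Qed.

Lemma qrate_gt0_of_irreducible :
  ~ finite_set S -> irreducible S lam -> forall y, S y -> 0 < q y.
Proof.
move=> infS irr y Sy.
have [z [Sz yz]] := infinite_nat_set_unbounded infS y.+1.
have [[|v s] [/= zy]] := irr y z Sy Sz; first by move: yz; rewrite -zy ltnn.
move=> /andP[/andP[lam_pos neq_yv] _].
set eta := v%:Z - y%:Z in lam_pos.
have etaG : eta \in Gamma.
  by apply/not_notP => /negP etaNG; move: lam_pos; rewrite lam_notin_Gamma // ltxx.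
have eta_neq0 : eta != 0 by rewrite subr_eq0 eqz_nat eq_sym.
rewrite /qrate -big_filter (bigD1_seq eta) ?filter_uniq ?mem_filter ?eta_neq0 //=.
apply: lt_le_trans lam_pos _; rewrite lerDl; apply: sumr_ge0 => e _; exact: lam_ge0.
Qed.

Hypothesis qrate_gt0 : forall y, S y -> 0 < q y.

(** * The jump chain and its one-step mean *)

Definition jump_bound : nat := \sum_(eta <- Gamma) `|eta|%N.

Definition window (y : nat) : seq nat := iota 0 (y + jump_bound).+1.

(* The jump-chain kernel, set to [0] outside [S] so that it is nonnegative
   and substochastic everywhere. *)
Definition kern (y v : nat) : R := if `[< S y >] then jumpP Gamma lam y v else 0.

Definition step_mean (A : nat -> R) (y : nat) : R :=
  \sum_(v <- window y) kern y v * A v.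

Lemma absz_addzBn (y v : nat) : absz (y%:Z + (v%:Z - y%:Z)) = v.
Proof. lia. Qed.

Lemma absz_le_jump_bound eta : eta \in Gamma -> (`|eta| <= jump_bound)%N.
Proof. by move=> etaG; rewrite /jump_bound (bigD1_seq eta) //= leq_addr. Qed.

Lemma kern_ge0 y v : 0 <= kern y v.
Proof.
rewrite /kern /jumpP; case: asboolP => // _; case: eqP => // _.
by rewrite divr_ge0 ?qrate_ge0.
Qed.

Lemma kernE y v : S y -> kern y v = jumpP Gamma lam y v.
Proof. by rewrite /kern; case: asboolP. Qed.

Lemma jumpP_notS y v : S y -> ~ S v -> jumpP Gamma lam y v = 0.
Proof.
move=> Sy Sv; rewrite /jumpP; case: eqP => // _.
by rewrite lam_exit ?mul0r // => -[_]; rewrite absz_addzBn.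
Qed.

Lemma kern_neq0 y v : kern y v != 0 -> [/\ S y, S v & v \in window y].
Proof.
rewrite /kern; case: asboolP => [Sy|_]; last by rewrite eqxx.
rewrite /jumpP; case: (eqVneq y v) => [_|_]; first by rewrite eqxx.
rewrite mulf_eq0 negb_or => /andP[lam_neq0 _]; split=> //.
  apply/not_notP => Sv; move: lam_neq0; rewrite lam_exit ?eqxx // => -[_].
  by rewrite absz_addzBn.
have etaG : v%:Z - y%:Z \in Gamma.
  by apply/not_notP => /negP etaNG; move: lam_neq0; rewrite lam_notin_Gamma ?eqxx.
have := absz_le_jump_bound etaG; rewrite mem_iota; lia.
Qed.

Lemma window_sumE y (g : nat -> R) : S y ->
  \sum_(v <- window y | v != y) lam (v%:Z - y%:Z) y * g v =
  \sum_(eta <- Gamma | eta != 0) lam eta y * g (absz (y%:Z + eta)).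
Proof.
move=> Sy.
have split_v v : v != y -> lam (v%:Z - y%:Z) y * g v =
    \sum_(eta <- Gamma | eta == v%:Z - y%:Z) lam eta y * g v.
  move=> _; case: (boolP (v%:Z - y%:Z \in Gamma)) => etaG.
    by rewrite -big_filter filter_pred1_uniq // big_seq1.
  rewrite lam_notin_Gamma // mul0r big1_seq // => eta /andP[/eqP -> _].
  by rewrite lam_notin_Gamma // mul0r.
rewrite (eq_bigr _ split_v) (exchange_big_dep (fun eta => eta != 0)) /=; last first.
  by move=> v eta neq_vy /eqP->; rewrite subr_eq0 eqz_nat.
apply: eq_bigr => eta eta_neq0.
case: (eqVneq (lam eta y) 0) => [->|lam_neq0].
  by rewrite mul0r big1 // => v _; rewrite mul0r.
have etaG : eta \in Gamma.
  by apply/not_notP => /negP etaNG; move: lam_neq0; rewrite lam_notin_Gamma ?eqxx.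
have [w_ge0 _] : inS S (y%:Z + eta).
  by apply/not_notP => yNS; move: lam_neq0; rewrite lam_exit ?eqxx.
set w := absz (y%:Z + eta).
have hw : (w < (y + jump_bound).+1)%N by have := absz_le_jump_bound etaG; rewrite /w; lia.
rewrite (eq_bigl (fun v => v == w)) /=; last first.
  by move=> v; apply/andP/eqP => [[_ /eqP]|->]; rewrite /w; [lia|split; apply/eqP; lia].
by rewrite /window -big_filter filter_pred1_uniq ?iota_uniq ?mem_iota // big_seq1.
Qed.

Lemma step_meanE A y : S y ->
  step_mean A y = (q y)^-1 * \sum_(eta <- Gamma | eta != 0) lam eta y * A (absz (y%:Z + eta)).
Proof.
move=> Sy; rewrite -window_sumE // mulr_sumr big_mkcond /=.
apply: eq_bigr => v _; rewrite kernE // /jumpP eq_sym.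
by case: eqP => _; rewrite ?mul0r // mulrAC mulrC.
Qed.

Lemma step_mean_cst c y : S y -> step_mean (fun=> c) y = c.
Proof.
move=> Sy; rewrite step_meanE // -mulr_suml /qrate mulrA mulVf ?mul1r //.
by rewrite gt_eqF ?qrate_gt0.
Qed.

Lemma gen_step_mean f y : S y -> gen Gamma lam f y = q y * (step_mean f y - f y).
Proof.
move=> Sy; rewrite step_meanE // mulrBr mulrA mulfV ?gt_eqF ?qrate_gt0 // mul1r.
rewrite /gen /qrate mulr_suml (bigID (fun eta => eta != 0)) /= addrC big1; last first.
  by move=> eta /negbNE/eqP->; rewrite addr0 absz_nat subrr mulr0.
by rewrite add0r -sumrB; apply: eq_bigr => eta _; rewrite mulrBr.
Qed.

Lemma step_mean_le A B y : (forall v, v \in window y -> S v -> A v <= B v) ->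
  step_mean A y <= step_mean B y.
Proof.
move=> AB; rewrite /step_mean !big_seq; apply: ler_sum => v vy.
have [->|/kern_neq0[_ Sv _]] := eqVneq (kern y v) 0; first by rewrite !mul0r.
by rewrite ler_wpM2l ?kern_ge0 ?AB.
Qed.

Lemma step_mean_ge0 A y : (forall v, S v -> 0 <= A v) -> 0 <= step_mean A y.
Proof.
move=> A_ge0; apply: sumr_ge0 => v _.
have [->|/kern_neq0[_ Sv _]] := eqVneq (kern y v) 0; first by rewrite mul0r.
by rewrite mulr_ge0 ?kern_ge0 ?A_ge0.
Qed.

Lemma step_mean_le_cst A c y : 0 <= c -> (forall v, S v -> A v <= c) ->
  step_mean A y <= c.
Proof.
move=> c_ge0 Ac; case: (pselect (S y)) => Sy.
  by rewrite -[leRHS](step_mean_cst _ Sy); apply: step_mean_le => v _; apply: Ac.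
by rewrite /step_mean big1 // => v _; rewrite /kern; case: asboolP => // _; rewrite mul0r.
Qed.

Lemma step_meanD A B y :
  step_mean (fun v => A v + B v) y = step_mean A y + step_mean B y.
Proof. by rewrite -big_split; apply: eq_bigr => v _; rewrite mulrDr. Qed.

Lemma step_meanZ c A y : step_mean (fun v => c * A v) y = c * step_mean A y.
Proof. by rewrite mulr_sumr; apply: eq_bigr => v _; rewrite mulrCA. Qed.

Lemma step_meanMr A c y : step_mean (fun v => A v * c) y = step_mean A y * c.
Proof. by rewrite mulr_suml; apply: eq_bigr => v _; rewrite mulrA. Qed.

(** * Hitting functionals truncated after n jumps *)

(* For the jump chain [Y] started at [y], let [T_D] be the first [k >= 1]
   with [Y_k \in D], and let the time of the continuous chain be measured by
   the mean holding times [1 / q].  Then [hit_prob D n y = P(T_D <= n)],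
   [hit_time D n y = E(time to reach D; T_D <= n)],
   [trunc_time D n y = E(time spent before jump min(T_D, n))],
   [hit_first D E n y = P(T_D <= n, T_D < T_E)] and
   [stopped_mean D g n y = E(g (Y_(min(T_D, n))))]. *)
Fixpoint hit_prob (D : pred nat) n y : R :=
  if n is n'.+1 then step_mean (fun v => if D v then 1 else hit_prob D n' v) y
  else 0.

Fixpoint hit_time (D : pred nat) n y : R :=
  if n is n'.+1 then
    step_mean (fun v => if D v then (q y)^-1
                        else hit_prob D n' v * (q y)^-1 + hit_time D n' v) y
  else 0.

Fixpoint trunc_time (D : pred nat) n y : R :=
  if n is n'.+1 then
    (q y)^-1 + step_mean (fun v => if D v then 0 else trunc_time D n' v) y
  else 0.

Fixpoint hit_first (D E : pred nat) n y : R :=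
  if n is n'.+1 then
    step_mean (fun v => if D v then 1 else if E v then 0 else hit_first D E n' v) y
  else 0.

Fixpoint stopped_mean (D : pred nat) (g : nat -> R) n y : R :=
  if n is n'.+1 then step_mean (fun v => if D v then g v else stopped_mean D g n' v) y
  else g y.

Arguments hit_prob D n y : simpl never.
Arguments hit_time D n y : simpl never.
Arguments trunc_time D n y : simpl never.
Arguments hit_first D E n y : simpl never.
Arguments stopped_mean D g n y : simpl never.

Lemma invq_ge0 y : 0 <= (q y)^-1.
Proof. by rewrite invr_ge0 qrate_ge0. Qed.

Section Monotonicity.
Variables D E : pred nat.

Lemma hit_prob_ge0 n y : 0 <= hit_prob D n y.
Proof.
elim: n y => [|n IH] y //; apply: step_mean_ge0 => v _.
by case: (D v); rewrite ?IH.
Qed.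

Lemma hit_prob_le1 n y : hit_prob D n y <= 1.
Proof.
elim: n y => [|n IH] y //; apply: step_mean_le_cst => // v _.
by case: (D v); rewrite ?IH.
Qed.

Lemma hit_prob_le n m y : (n <= m)%N -> hit_prob D n y <= hit_prob D m y.
Proof.
move: n m; apply/nondecreasing_seqP => n; elim: n y => [|n IH] y.
  exact: hit_prob_ge0.
by apply: step_mean_le => v _ _; case: (D v); rewrite ?IH.
Qed.

Lemma hit_time_ge0 n y : 0 <= hit_time D n y.
Proof.
elim: n y => [|n IH] y //; apply: step_mean_ge0 => v _.
by case: (D v); rewrite ?invq_ge0 // addr_ge0 ?mulr_ge0 ?hit_prob_ge0 ?invq_ge0.
Qed.

Lemma hit_time_le n m y : (n <= m)%N -> hit_time D n y <= hit_time D m y.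
Proof.
move: n m; apply/nondecreasing_seqP => n; elim: n y => [|n IH] y.
  exact: hit_time_ge0.
apply: step_mean_le => v _ _; case: (D v) => //.
by rewrite lerD ?IH ?ler_wpM2r ?invq_ge0 ?hit_prob_le.
Qed.

Lemma trunc_time_ge0 n y : 0 <= trunc_time D n y.
Proof.
elim: n y => [|n IH] y //; rewrite addr_ge0 ?invq_ge0 //.
by apply: step_mean_ge0 => v _; case: (D v); rewrite ?IH.
Qed.

Lemma trunc_time_le n m y : (n <= m)%N -> trunc_time D n y <= trunc_time D m y.
Proof.
move: n m; apply/nondecreasing_seqP => n; elim: n y => [|n IH] y.
  exact: trunc_time_ge0.
by rewrite lerD2l; apply: step_mean_le => v _ _; case: (D v); rewrite ?IH.
Qed.

Lemma hit_first_ge0 n y : 0 <= hit_first D E n y.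
Proof.
elim: n y => [|n IH] y //; apply: step_mean_ge0 => v _.
by case: (D v); case: (E v); rewrite ?IH.
Qed.

Lemma hit_first_le n m y : (n <= m)%N -> hit_first D E n y <= hit_first D E m y.
Proof.
move: n m; apply/nondecreasing_seqP => n; elim: n y => [|n IH] y.
  exact: hit_first_ge0.
by apply: step_mean_le => v _ _; case: (D v); case: (E v); rewrite ?IH.
Qed.

End Monotonicity.

Section FirstVisit.
Variables x w : nat.
Hypothesis neq_xw : x != w.

Lemma hit_first_add_le1 n y :
  hit_first (pred1 x) (pred1 w) n y + hit_first (pred1 w) (pred1 x) n y <= 1.
Proof.
elim: n y => [|n IH] y; first by rewrite addr0.
rewrite -step_meanD; apply: step_mean_le_cst => // v _ /=.
case: (eqVneq v x) => [->|neq_vx]; first by rewrite (negPf neq_xw) addr0.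
by case: (eqVneq v w) => [_|neq_vw]; rewrite ?add0r ?IH.
Qed.

(* Split according to which of [x] and [w] is visited first. *)
Lemma hit_prob_le_hit_first n y :
  hit_prob (pred1 x) n y <= hit_first (pred1 x) (pred1 w) n y +
                            hit_first (pred1 w) (pred1 x) n y * hit_prob (pred1 x) n w.
Proof.
elim: n y => [|n IH] y; first by rewrite mul0r addr0.
rewrite -step_meanMr -step_meanD; apply: step_mean_le => v _ _ /=.
case: (eqVneq v x) => [->|neq_vx]; first by rewrite (negPf neq_xw) mul0r addr0.
case: (eqVneq v w) => [->|neq_vw]; first by rewrite add0r mul1r hit_prob_le.
apply: le_trans (IH v) _; rewrite lerD2l ler_wpM2l ?hit_first_ge0 //.
exact: hit_prob_le.
Qed.

Lemma trunc_time_ge_hit_first n m y :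
  hit_first (pred1 w) (pred1 x) n y * trunc_time (pred1 x) m w <=
  trunc_time (pred1 x) (n + m) y.
Proof.
elim: n y => [|n IH] y; first by rewrite mul0r trunc_time_ge0.
rewrite addSn /= -step_meanMr -[leLHS]add0r lerD ?invq_ge0 //.
apply: step_mean_le => v _ _ /=.
case: (eqVneq v w) => [->|neq_vw].
  by rewrite mul1r eq_sym (negPf neq_xw) trunc_time_le ?leq_addl.
by case: (eqVneq v x) => [_|neq_vx]; rewrite ?mul0r ?IH.
Qed.

End FirstVisit.

Lemma trunc_time_sub (D1 D2 : pred nat) n y : (forall v, D1 v -> D2 v) ->
  trunc_time D2 n y <= trunc_time D1 n y.
Proof.
move=> D12; elim: n y => [|n IH] y //; rewrite lerD2l.
apply: step_mean_le => v _ _; case: (boolP (D1 v)) => [/D12 ->|_] //.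
by case: (D2 v); rewrite ?trunc_time_ge0 ?IH.
Qed.

Section StoppedMean.
Variable D : pred nat.

Lemma stopped_mean_outside_le (D' : pred nat) n y : (forall v, D' v -> D v) ->
  stopped_mean D (fun v => (~~ D v)%:R) n y <= 1 - hit_prob D' n y.
Proof.
move=> D'D; elim: n y => [|n IH] y; first by rewrite /hit_prob /stopped_mean subr0; case: (D y).
rewrite lerBrDr /= -step_meanD; apply: step_mean_le_cst => // v _.
case: (boolP (D v)) => Dv; first by rewrite add0r; case: (D' v); rewrite ?hit_prob_le1.
have -> : D' v = false by apply/negP => /D'D; rewrite (negPf Dv).
by rewrite -lerBrDr IH.
Qed.

Lemma subharmonic_le_stopped_mean (f : nat -> R) :
  (forall y, S y -> ~~ D y -> 0 <= gen Gamma lam f y) ->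
  forall n y, S y -> ~~ D y -> f y <= stopped_mean D f n y.
Proof.
move=> f_sub; elim=> [|n IH] y Sy NDy //=.
have : 0 <= gen Gamma lam f y by exact: f_sub.
rewrite gen_step_mean // pmulr_rge0 ?qrate_gt0 // subr_ge0 => /le_trans; apply.
by apply: step_mean_le => v _ Sv; case: (boolP (D v)) => Dv; rewrite ?IH.
Qed.

Lemma stopped_mean_le_drift (f : nat -> R) (C : R) : 0 <= C ->
  (forall y, S y -> ~~ D y -> gen Gamma lam f y <= C) ->
  forall n y, S y -> ~~ D y -> stopped_mean D f n y <= f y + C * trunc_time D n y.
Proof.
move=> C_ge0 f_drift; elim=> [|n IH] y Sy NDy /=; first by rewrite mulr0 addr0.
have step_f : step_mean f y <= f y + C * (q y)^-1.
  have := f_drift y Sy NDy.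
  by rewrite gen_step_mean // -ler_pdivlMl ?qrate_gt0 // lerBlDl mulrC.
apply: le_trans
  (step_mean_le (B := fun v => f v + C * (if D v then 0 else trunc_time D n v)) _) _.
  move=> v _ Sv; case: (boolP (D v)) => Dv; first by rewrite mulr0 addr0.
  exact: IH.
by rewrite step_meanD step_meanZ mulrDr addrA lerD2r.
Qed.

Lemma stopped_mean_le_lin (u g h : nat -> R) (K c e : R) : 0 <= K ->
  (forall v, S v -> u v <= K + c * g v + e * h v) ->
  forall n y, S y ->
  stopped_mean D u n y <= K + c * stopped_mean D g n y + e * stopped_mean D h n y.
Proof.
move=> K_ge0 u_le; elim=> [|n IH] y Sy /=; first exact: u_le.
apply: le_trans (step_mean_le (B := fun v => K + c * (if D v then g v else stopped_mean D g n v)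
   + e * (if D v then h v else stopped_mean D h n v)) _) _.
  by move=> v _ Sv; case: (D v); rewrite ?u_le ?IH.
by rewrite !step_meanD !step_meanZ !lerD2r; apply: step_mean_le_cst.
Qed.

End StoppedMean.

(** * Expansion over jump paths *)

Lemma hit_probS D n y :
  hit_prob D n.+1 y = step_mean (fun v => if D v then 1 else hit_prob D n v) y.
Proof. by []. Qed.

Lemma hit_timeS D n y : hit_time D n.+1 y =
  step_mean (fun v => if D v then (q y)^-1
                      else hit_prob D n v * (q y)^-1 + hit_time D n v) y.
Proof. by []. Qed.

Fixpoint paths n y : seq (seq nat) :=
  [::] :: if n is n'.+1 then [seq v :: s | v <- window y, s <- paths n' v] else [::].

Fixpoint path_weight y (s : seq nat) : R :=
  if s is v :: s' then kern y v * path_weight v s' else 1.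

Definition hits (D : pred nat) y (s : seq nat) : bool :=
  [&& s != [::], D (last y s) & all (fun u => ~~ D u) (behead (belast y s))].

Lemma big_paths (F : seq nat -> R) n y :
  \sum_(s <- paths n.+1 y) F s = F [::] + \sum_(v <- window y) \sum_(s <- paths n v) F (v :: s).
Proof.
by rewrite big_cons big_allpairs_dep.
Qed.

Lemma big_paths_nil (F : seq nat -> R) n y :
  \sum_(s <- paths n y) F s = F [::] + \sum_(s <- paths n y) (if s is [::] then 0 else F s).
Proof.
case: n => [|n]; first by rewrite !big_cons !big_nil /= !addr0.
by rewrite !big_paths /= add0r.
Qed.

Lemma hits_nil D y : hits D y [::] = false.
Proof. by []. Qed.

Lemma hits_cons D y v s :
  hits D y (v :: s) = if s is [::] then D v else ~~ D v && hits D v s.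
Proof.
case: s => [|u s]; first by rewrite /hits /= andbT.
by rewrite /hits /=; case: (D v); case: (D (last u s)); case: all.
Qed.

Lemma sum_hits_cons D y v n (W : seq nat -> R) :
  \sum_(s <- paths n v) (hits D y (v :: s))%:R * W s =
  (D v)%:R * W [::] + (~~ D v)%:R * \sum_(s <- paths n v) (hits D v s)%:R * W s.
Proof.
rewrite big_paths_nil [in RHS]big_paths_nil hits_cons hits_nil mul0r add0r.
congr (_ + _); rewrite mulr_sumr; apply: eq_bigr => -[|u s] _; first by rewrite mulr0.
by rewrite hits_cons; case: (D v); rewrite ?mul0r ?mul1r.
Qed.

Lemma hit_prob_paths D n y :
  hit_prob D n y = \sum_(s <- paths n y) (hits D y s)%:R * path_weight y s.
Proof.
elim: n y => [|n IH] y; first by rewrite big_cons big_nil hits_nil mul0r addr0.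
rewrite big_paths hits_nil mul0r add0r hit_probS; apply: eq_bigr => v _.
under eq_bigr do rewrite /= mulrCA.
rewrite -mulr_sumr sum_hits_cons -IH; congr (_ * _).
by case: (D v); rewrite /= ?mulr1 ?mul0r ?addr0 ?mul1r ?add0r.
Qed.

Lemma excursion_time_cons y v s :
  excursion_time Gamma lam y (v :: s) = (q y)^-1 + excursion_time Gamma lam v s.
Proof. by rewrite /excursion_time /= big_cons. Qed.

Lemma hit_time_paths D n y : hit_time D n y =
  \sum_(s <- paths n y) (hits D y s)%:R * path_weight y s * excursion_time Gamma lam y s.
Proof.
elim: n y => [|n IH] y; first by rewrite big_cons big_nil hits_nil !mul0r addr0.
rewrite big_paths hits_nil !mul0r add0r hit_timeS; apply: eq_bigr => v _.
rewrite (eq_bigr (fun s => kern y v * ((hits D y (v :: s))%:R *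
    (path_weight v s * ((q y)^-1 + excursion_time Gamma lam v s))))); last first.
  by move=> s _; rewrite /= excursion_time_cons; ring.
rewrite -mulr_sumr sum_hits_cons; congr (_ * _).
have -> : \sum_(s <- paths n v) (hits D v s)%:R *
    (path_weight v s * ((q y)^-1 + excursion_time Gamma lam v s)) =
    hit_prob D n v * (q y)^-1 + hit_time D n v.
  by rewrite hit_prob_paths IH mulr_suml -big_split; apply: eq_bigr => s _ /=; ring.
rewrite /excursion_time big_nil addr0 mul1r.
by case: (D v); rewrite /= ?mul1r ?mul0r ?addr0 ?add0r.
Qed.

Lemma paths_uniq n y : uniq (paths n y).
Proof.
elim: n y => [|n IH] y //; rewrite cons_uniq; apply/andP; split.
  by apply/allpairsPdep => -[v [s []]].
by apply: allpairs_uniq_dep => [|v _|[v s] [v' s'] _ _ /= [-> ->]]; rewrite ?iota_uniq.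
Qed.

Lemma mem_paths n y s : (size s <= n)%N -> path (fun a b => b \in window a) y s ->
  s \in paths n y.
Proof.
elim: n y s => [|n IH] y [|v s] //; rewrite ?mem_head // in_cons => size_s /andP[vy ps].
by apply/orP; right; apply/allpairsPdep; exists v, s; rewrite IH.
Qed.

Lemma path_weight_ge0 y s : 0 <= path_weight y s.
Proof. by elim: s y => [|v s IH] y //=; rewrite mulr_ge0 ?kern_ge0. Qed.

Lemma path_weight_window y s :
  path_weight y s != 0 -> path (fun a b => b \in window a) y s.
Proof.
elim: s y => [|v s IH] y //=; rewrite mulf_eq0 negb_or => /andP[/kern_neq0[_ _ ->]].
exact: IH.
Qed.

Lemma path_probE y s : S y -> path_prob Gamma lam y s = path_weight y s.
Proof.
elim: s y => [|v s IH] y Sy //=; rewrite kernE //.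
case: (pselect (S v)) => Sv; first by rewrite IH.
by rewrite jumpP_notS // !mul0r.
Qed.

Lemma hitsP x s : reflect (excursion x s) (hits (pred1 x) x s).
Proof.
by apply: (iffP and3P) => [[/eqP ? /eqP ? ?]|[? [? ?]]]; split=> //; apply/eqP.
Qed.

Lemma hit_time_le_expected_return_time x n : S x ->
  ((hit_time (pred1 x) n x)%:E <= expected_return_time Gamma lam x)%E.
Proof.
move=> Sx; rewrite hit_time_paths.
set l := [seq s <- paths n x | hits (pred1 x) x s].
rewrite (_ : \sum_(s <- _) _ =
    \sum_(s <- l) path_prob Gamma lam x s * excursion_time Gamma lam x s); last first.
  rewrite big_filter [RHS]big_mkcond /=; apply: eq_bigr => s _.
  by case: hits; rewrite ?mul1r ?mul0r // path_probE.
apply: esum_ge; exists [set` l].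
  split; first exact: finite_seq.
  by move=> s /=; rewrite mem_filter => /andP[/hitsP].
by rewrite -fsbig_seq ?filter_uniq ?paths_uniq // sumEFin.
Qed.

Lemma sum_excursions_le_hit_prob x n (L : seq (seq nat)) : uniq L ->
  (forall s, s \in L -> excursion x s /\ (size s <= n)%N) ->
  \sum_(s <- L) path_weight x s <= hit_prob (pred1 x) n x.
Proof.
move=> uL Lexc.
have -> : \sum_(s <- L) path_weight x s =
    \sum_(s <- paths n x | s \in L) (hits (pred1 x) x s)%:R * path_weight x s.
  rewrite (bigID (mem (paths n x))) /= [X in _ + X]big1_seq ?addr0; last first.
    move=> s /andP[s_notin sL]; apply/eqP; apply: contraNT s_notin.
    by move=> /path_weight_window ws; rewrite mem_paths ?(Lexc s sL).2.
  rewrite -big_filter (perm_big [seq s <- paths n x | s \in L]); last first.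
    by apply: uniq_perm; rewrite ?filter_uniq ?paths_uniq // => s; rewrite !mem_filter andbC.
  by rewrite big_filter; apply: eq_bigr => s sL; have /hitsP-> := (Lexc s sL).1; rewrite mul1r.
rewrite hit_prob_paths [leRHS](bigID (mem L)) /= lerDl sumr_ge0 // => s _.
by rewrite mulr_ge0 ?path_weight_ge0.
Qed.

Lemma return_prob1_hit_prob x : S x -> return_prob Gamma lam x = 1%E ->
  forall d : R, 0 < d -> exists n, 1 - d <= hit_prob (pred1 x) n x.
Proof.
move=> Sx ret1 d d_gt0.
have ret_fin : return_prob Gamma lam x \is a fin_num by rewrite ret1.
have [_ [A [finA Aexc] <-]] := ub_ereal_sup_adherent d_gt0 ret_fin.
move: ret1; rewrite /return_prob /esum => ->.
set L := finmap.enum_fset (fset_set A).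
rewrite fsbig_finite // sumEFin -EFinB lte_fin => /ltW sum_L.
exists (\max_(s <- L) size s)%N; apply: le_trans sum_L _.
rewrite (eq_bigr _ (fun s _ => path_probE s Sx)).
apply: sum_excursions_le_hit_prob; first exact: finmap.fset_uniq.
move=> s sL; split; first by apply: Aexc; move: sL; rewrite in_fset_set // inE.
exact: (leq_bigmax_seq _ sL).
Qed.

(** * Irreducibility and recurrence *)

Definition pos_rate (a b : nat) : bool := (0 < lam (b%:Z - a%:Z) a) && (a != b).

Lemma pos_rate_S a b : S a -> pos_rate a b -> S b.
Proof.
move=> Sa /andP[lam_pos _]; apply/not_notP => Sb; move: lam_pos.
by rewrite lam_exit ?ltxx // => -[_]; rewrite absz_addzBn.
Qed.

Lemma kern_gt0 a b : S a -> pos_rate a b -> 0 < kern a b.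
Proof.
by move=> Sa /andP[lam_pos neq_ab]; rewrite kernE // /jumpP (negPf neq_ab) divr_gt0 ?qrate_gt0.
Qed.

Lemma step_mean_ge_term F y v : v \in window y -> (forall u, 0 <= F u) ->
  kern y v * F v <= step_mean F y.
Proof.
move=> vy F_ge0; rewrite /step_mean (bigD1_seq v) ?iota_uniq //= lerDl.
by apply: sumr_ge0 => u _; rewrite mulr_ge0 ?kern_ge0.
Qed.

Lemma hit_first_gt0 x w s y : S y -> path pos_rate y s -> last y s = w ->
  x \notin s -> s != [::] -> 0 < hit_first (pred1 w) (pred1 x) (size s) y.
Proof.
elim: s y => [|v s IH] y Sy //= /andP[pos_yv ps] last_w.
rewrite in_cons negb_or => /andP[/negPf neq_xv x_notin_s] _.
have Sv := pos_rate_S Sy pos_yv.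
have kern_yv := kern_gt0 Sy pos_yv.
set F := fun u => if u == w then 1 else if u == x then 0
                  else hit_first (pred1 w) (pred1 x) (size s) u.
have F_v : 0 < F v.
  rewrite /F; case: (eqVneq v w) => [_|neq_vw] //; rewrite eq_sym neq_xv IH //.
  by apply: contra_neq neq_vw => s_nil; rewrite -last_w s_nil.
apply: lt_le_trans (mulr_gt0 kern_yv F_v) _; apply: (step_mean_ge_term (F := F)).
  by have /kern_neq0[] := lt0r_neq0 kern_yv.
by move=> u; rewrite /F; case: (u == w); case: (u == x); rewrite ?hit_first_ge0.
Qed.

Lemma hit_first_irreducible_gt0 x w : irreducible S lam -> S x -> S w -> w != x ->
  exists n, 0 < hit_first (pred1 w) (pred1 x) n x.
Proof.
move=> irr Sx Sw neq_wx.
have [s [last_w ps]] := irr x w Sx Sw.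
have x_visit : (x == x) || (x \in s) by rewrite eqxx.
have [s' [ps' last_w' x_notin]] := path_from_last_visit ps last_w neq_wx x_visit.
exists (size s'); apply: hit_first_gt0 => //.
by apply: contra_neq neq_wx => s'_nil; rewrite -last_w' s'_nil.
Qed.

Lemma recurrent_hit_prob x w : recurrent S Gamma lam -> irreducible S lam -> S x -> S w ->
  forall d : R, 0 < d -> exists n, 1 - d <= hit_prob (pred1 x) n w.
Proof.
move=> rec irr Sx Sw d d_gt0.
case: (eqVneq w x) => [->|neq_wx]; first exact: return_prob1_hit_prob (rec x Sx) d d_gt0.
have [n0 be_gt0] := hit_first_irreducible_gt0 irr Sx Sw neq_wx.
set be := hit_first (pred1 w) (pred1 x) n0 x in be_gt0.
have [n1 ret_n1] := return_prob1_hit_prob Sx (rec x Sx) (mulr_gt0 d_gt0 be_gt0).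
exists (maxn n0 n1); set n := maxn n0 n1.
have be_le : be <= hit_first (pred1 w) (pred1 x) n x by rewrite hit_first_le ?leq_maxl.
have ret_n : 1 - d * be <= hit_prob (pred1 x) n x.
  by apply: le_trans ret_n1 _; rewrite hit_prob_le ?leq_maxr.
rewrite eq_sym in neq_wx.
have := hit_prob_le_hit_first neq_wx n x; have := hit_first_add_le1 neq_wx n x.
have := hit_prob_le1 (pred1 x) n w.
nra.
Qed.

(* Recurrence makes the chain reach [x] almost surely from every state, so no time
   is lost in the limit by counting only the paths that reach [x]. *)
Lemma trunc_time_le_hit_time x : recurrent S Gamma lam -> irreducible S lam -> S x ->
  forall n y, S y -> forall e : R, 0 < e ->
  exists m, trunc_time (pred1 x) n y <= hit_time (pred1 x) m y + e.
Proof.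
move=> rec irr Sx; elim=> [|n IH] y Sy e e_gt0; first by exists 0%N; rewrite add0r ltW.
set X := pred1 x; set e1 := e / 2; set e2 := e / 2 * q y.
have e1_gt0 : 0 < e1 by rewrite divr_gt0.
have e2_gt0 : 0 < e2 by rewrite mulr_gt0 ?qrate_gt0 ?divr_gt0.
pose Q v m := S v -> trunc_time X n v <= hit_time X m v + e1 /\ 1 - e2 <= hit_prob X m v.
have Q_mono v m m' : (m <= m')%N -> Q v m -> Q v m'.
  move=> le_mm' Qm Sv; have [time_m hit_m] := Qm Sv; split.
    by apply: le_trans time_m _; rewrite lerD2r hit_time_le.
  by apply: le_trans hit_m _; rewrite hit_prob_le.
have [m Qm] : exists m, forall v, v \in window y -> Q v m.
  apply: (exists_common_bound (r := window y) Q_mono) => v _.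
  case: (pselect (S v)) => Sv; last by exists 0%N.
  have [m1 time_m1] := IH v Sv e1 e1_gt0.
  have [m2 hit_m2] := recurrent_hit_prob rec irr Sx Sv e2_gt0.
  exists (maxn m1 m2) => _; split.
    by apply: le_trans time_m1 _; rewrite lerD2r hit_time_le ?leq_maxl.
  by apply: le_trans hit_m2 _; rewrite hit_prob_le ?leq_maxr.
exists m.+1.
set A := step_mean (fun v => if X v then 0 else hit_time X m v) y.
have trunc_le : trunc_time X n.+1 y <= (q y)^-1 + A + e1.
  rewrite -addrA lerD2l -[e1](step_mean_cst _ Sy) -step_meanD.
  apply: step_mean_le => v vy Sv; case: (X v); first by rewrite add0r ltW.
  by have [] := Qm v vy Sv.
have hit_ge : (1 - e2) * (q y)^-1 + A <= hit_time X m.+1 y.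
  rewrite -[X in X + _](step_mean_cst _ Sy) -step_meanD.
  apply: step_mean_le => v vy Sv; case: (X v).
    by rewrite addr0 ler_piMl ?invq_ge0 // gerBl ltW.
  by rewrite lerD2r ler_wpM2r ?invq_ge0 //; have [] := Qm v vy Sv.
have e2_q : e2 * (q y)^-1 = e1 by rewrite /e2 -mulrA mulfV ?mulr1 // gt_eqF ?qrate_gt0.
have e_split : e = e1 + e1 by rewrite /e1 -splitr.
rewrite mulrBl mul1r e2_q in hit_ge.
rewrite e_split; lra.
Qed.

(** * The Lyapunov argument *)

Lemma trunc_time_bounded_of_return x z (B : pred nat) r :
  recurrent S Gamma lam -> irreducible S lam -> S x -> S z -> z != x -> B x ->
  expected_return_time Gamma lam x = r%:E -> exists c, forall m, trunc_time B m z <= c.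
Proof.
move=> rec irr Sx Sz neq_zx Bx ert.
have trunc_x n : trunc_time (pred1 x) n x <= r.
  apply/ler_addgt0Pr => e e_gt0.
  have [m trunc_m] := trunc_time_le_hit_time rec irr Sx n Sx e_gt0.
  by apply: le_trans trunc_m _; rewrite lerD2r -lee_fin -ert hit_time_le_expected_return_time.
have [n0 be_gt0] := hit_first_irreducible_gt0 irr Sx Sz neq_zx.
exists (r / hit_first (pred1 z) (pred1 x) n0 x) => m.
have xB v : pred1 x v -> B v by move=> /eqP->.
apply: le_trans (trunc_time_sub m z xB) _.
rewrite ler_pdivlMr // mulrC; apply: le_trans (trunc_x (n0 + m)%N).
by apply: trunc_time_ge_hit_first; rewrite eq_sym.
Qed.

Section Lyapunov.
Variables (f1 f2 : nat -> R) (B : pred nat) (C : R).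
Hypothesis f2_ge0 : forall v, S v -> 0 <= f2 v.
Hypothesis f1_dominated :
  forall eps, 0 < eps -> exists K, 0 <= K /\ forall x, S x -> f1 x <= K + eps * f2 x.
Hypothesis C_ge0 : 0 <= C.
Hypothesis f1_subharmonic : forall y, S y -> ~~ B y -> 0 <= gen Gamma lam f1 y.
Hypothesis f2_drift : forall y, S y -> ~~ B y -> gen Gamma lam f2 y <= C.

Lemma f1_le_of_trunc_time_bounded x z K c :
  recurrent S Gamma lam -> irreducible S lam -> S x -> S z -> B x -> ~~ B z ->
  0 <= K -> (forall v, S v -> B v -> f1 v <= K) -> (forall m, trunc_time B m z <= c) ->
  f1 z <= K + 2^-1.
Proof.
move=> rec irr Sx Sz Bx NBz K_ge0 f1_B trunc_c.
have c_ge0 : 0 <= c := le_trans (trunc_time_ge0 _ 0 _) (trunc_c 0%N).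
set M := f2 z + C * c.
have M_ge0 : 0 <= M by rewrite addr_ge0 ?f2_ge0 ?mulr_ge0.
set eps := (4 * (M + 1))^-1.
have eps_gt0 : 0 < eps by rewrite invr_gt0; lra.
have [Ke [Ke_ge0 f1_le]] := f1_dominated eps_gt0.
set de := (4 * (Ke + 1))^-1.
have de_gt0 : 0 < de by rewrite invr_gt0; lra.
have [n hit_n] := recurrent_hit_prob rec irr Sx Sz de_gt0.
have f1_split v : S v -> f1 v <= K + Ke * (~~ B v)%:R + eps * f2 v.
  move=> Sv; have := f1_le v Sv; have := mulr_ge0 (ltW eps_gt0) (f2_ge0 Sv).
  by case: (boolP (B v)) => Bv /=; [have := f1_B v Sv Bv|]; lra.
have escape : stopped_mean B (fun v => (~~ B v)%:R) n z <= de.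
  have xB v : pred1 x v -> B v by move=> /eqP->.
  by have := stopped_mean_outside_le n z xB; lra.
have f2_stopped : stopped_mean B f2 n z <= M.
  apply: le_trans (stopped_mean_le_drift C_ge0 f2_drift n Sz NBz) _.
  by rewrite lerD2l ler_wpM2l.
have := subharmonic_le_stopped_mean f1_subharmonic n Sz NBz.
have := stopped_mean_le_lin B K_ge0 f1_split n Sz.
have := ler_wpM2l Ke_ge0 escape; have := ler_wpM2l (ltW eps_gt0) f2_stopped.
have := mulr_inv4S_le Ke_ge0; have := mulr_inv4S_le M_ge0.
rewrite -/de -/eps; lra.
Qed.

End Lyapunov.

Lemma expected_return_time_infinite (f1 f2 : nat -> R) (N0 : nat) (C : R) x :
  ~ finite_set S -> recurrent S Gamma lam -> irreducible S lam -> S x ->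
  (forall v, S v -> 0 <= f2 v) ->
  (forall M : R, exists N : nat, forall x, S x -> (N <= x)%N -> M <= f1 x) ->
  (forall M : R, exists N : nat, forall x, S x -> (N <= x)%N -> M <= f2 x / f1 x) ->
  0 <= C ->
  (forall y, S y -> (N0 <= y)%N -> 0 <= gen Gamma lam f1 y) ->
  (forall y, S y -> (N0 <= y)%N -> gen Gamma lam f2 y <= C) ->
  expected_return_time Gamma lam x = +oo%E.
Proof.
move=> infS rec irr Sx f2_ge0 f1_growth ratio_growth C_ge0 f1_sub f2_drift.
have ert_ge0 : (0 <= expected_return_time Gamma lam x)%E.
  apply: esum_ge0 => s _; rewrite lee_fin mulr_ge0 ?path_probE ?path_weight_ge0 //.
  by apply: sumr_ge0 => u _; apply: invq_ge0.
case ert: (expected_return_time Gamma lam x) ert_ge0 => [r| |] //= _; exfalso.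
set N := maxn N0 x.+1; set B : pred nat := fun v => (v < N)%N.
have Bx : B x by rewrite /B /N; lia.
have outside_B y : ~~ B y -> (N0 <= y)%N by rewrite /B /N; lia.
set K := \sum_(u <- iota 0 N) `|f1 u|.
have K_ge0 : 0 <= K by apply: sumr_ge0 => u _; apply: normr_ge0.
have f1_B v : S v -> B v -> f1 v <= K by move=> _; apply: ler_sum_norm_iota.
have [N1 f1_large] := f1_growth (K + 1).
have [z [Sz z_ge]] := infinite_nat_set_unbounded infS (maxn N N1).
have NBz : ~~ B z by rewrite /B -leqNgt; lia.
have neq_zx : z != x by apply: contraNneq NBz => ->.
have [c trunc_c] := trunc_time_bounded_of_return rec irr Sx Sz neq_zx Bx ert.
have f1_dominated eps (eps_gt0 : 0 < eps) :=
  ratio_growth_bound eps_gt0 f2_ge0 f1_growth ratio_growth.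
have := f1_le_of_trunc_time_bounded f2_ge0 f1_dominated C_ge0
  (fun y Sy NBy => f1_sub y Sy (outside_B y NBy)) (fun y Sy NBy => f2_drift y Sy (outside_B y NBy))
  rec irr Sx Sz Bx NBz K_ge0 f1_B trunc_c.
have := f1_large z Sz ltac:(lia); lra.
Qed.

End JumpChain.

Theorem mainTheorem5 (R : realType) (S : set nat) (Gamma : seq int)
    (lam : int -> nat -> R) (f1 f2 : nat -> R) :
  (* standing assumptions *)
  ~ finite_set S ->
  uniq Gamma ->
  (forall eta x, S x -> eta \notin Gamma -> lam eta x = 0) ->
  (forall eta x, 0 <= lam eta x) ->
  (forall eta x, S x -> ~ inS S (x%:Z + eta) -> lam eta x = 0) ->
  irreducible S lam ->
  (* X recurrent *)
  recurrent S Gamma lam ->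
  (* f1, f2 non-negative on S *)
  (forall x, S x -> 0 <= f1 x) ->
  (forall x, S x -> 0 <= f2 x) ->
  (* (i) *)
  (forall M : R, exists N : nat, forall x, S x -> (N <= x)%N -> M <= f1 x) ->
  (forall M : R, exists N : nat, forall x, S x -> (N <= x)%N -> M <= f2 x / f1 x) ->
  (* (ii) *)
  (exists N : nat, forall x, S x -> (N <= x)%N -> 0 <= gen Gamma lam f1 x) ->
  (* (iii) A f2 <~ 1 *)
  (exists C : R, 0 < C /\ exists N : nat, forall x, S x -> (N <= x)%N ->
      gen Gamma lam f2 x <= C * 1) ->
  null_recurrent S Gamma lam.
Proof.
move=> infS Gamma_uniq lam_notin lam_ge0 lam_exit irr rec _ f2_ge0 f1_growth ratio_growth
  [N1 f1_sub] [C [C_gt0 [N2 f2_drift]]].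
have qrate_gt0 := qrate_gt0_of_irreducible Gamma_uniq lam_notin lam_ge0 infS irr.
split=> // x Sx.
apply: (expected_return_time_infinite Gamma_uniq lam_notin lam_ge0 lam_exit qrate_gt0
  (N0 := maxn N1 N2) (C := C) infS rec irr Sx f2_ge0 f1_growth ratio_growth (ltW C_gt0)).
  by move=> y Sy le_y; apply: f1_sub Sy _; lia.
by move=> y Sy le_y; rewrite -[C]mulr1; apply: f2_drift Sy _; lia.
Qed.
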